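(* Let $\kappa\ge2$. The model $\mathrm{EE}_\kappa(((a,b),c))$ is contained in the real algebraic variety defined by the degree-$(\kappa+1)$ polynomials in the entries of $P$ given by the entries of the $2\kappa$ matrix expressions, for $k\in[\kappa]$, $$P_{+\cdot\cdot}\operatorname{Cof}(P_{\cdot+\cdot})^TP_{\cdot\cdot k}-P_{\cdot\cdot k}^T\operatorname{Cof}(P_{\cdot+\cdot})P_{+\cdot\cdot}^T,\qquad P_{\cdot\cdot k}\operatorname{Cof}(P_{+\cdot\cdot})P_{\cdot+\cdot}^T-P_{\cdot+\cdot}\operatorname{Cof}(P_{+\cdot\cdot})^TP_{\cdot\cdot k}^T.$$
   Context: A $\kappa$-state site pattern probability tensor on $X$ ($|X|=n$) is an $n$-way $\kappa\times\cdots\times\kappa$ array with one index per taxon, non-negative entries summing to 1. $P_Y$ is the marginalization to $Y\subseteq X$; $\psi^+|_Y$ is the induced rooted subtree; a 2-clade is a pair of leaves that are exactly the leaf descendants of some vertex. $\mathrm{UE}_\kappa(\psi^+)$: all such tensors $P$ such that for every $Y\subseteq X$ and every 2-clade $\{x,y\}$ of $\psi^+|_Y$, $P_Y$ is invariant under exchanging the $x$ and $y$ indices. For a $\kappa\times\kappa$ matrix $M$, $P*_kM$ is the tensor whose entry at $(i_1,\dots,i_n)$ is the $i_k$-th entry of $vM$, $v$ the row vector obtained by fixing all indices $\ell\ne k$ to $i_\ell$; $P*(M_1,\dots,M_n)=(\cdots(P*_1M_1)\cdots)*_nM_n$. $\mathrm{EE}_\kappa(\psi^+)$: all $\kappa$-state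 site pattern probability tensors $P$ such that $P*(M_1,\dots,M_n)=\tilde P$ for some non-singular Markov matrices $M_i$ and some non-negative $\tilde P\in\mathrm{UE}_\kappa(\psi^+)$. For a 3-way tensor $P=(p_{ijk})$ with indices ordered $a,b,c$: $P_{+\cdot\cdot}$ has $(j,k)$-entry $\sum_ip_{ijk}$; $P_{\cdot+\cdot}$ has $(i,k)$-entry $\sum_jp_{ijk}$; $P_{\cdot\cdot k}$ has $(i,j)$-entry $p_{ijk}$. $\operatorname{Cof}(A)$ is the matrix of cofactors of $A$; $^T$ is transpose. *)

(* Taxa X = {a,b,c}, tree psi+ = ((a,b),c); tensor index order a,b,c. *)
From HB Require Import structures.
From mathcomp Require Import all_boot all_order all_algebra.
Set Implicit Arguments. Unset Strict Implicit. Unset Printing Implicit Defensive.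
Import Order.TTheory GRing.Theory Num.Theory.
Local Open Scope ring_scope.

Definition tensor3 (R : Type) (kappa : nat) := 'I_kappa -> 'I_kappa -> 'I_kappa -> R.

Section Defs.
Variables (R : realFieldType) (kappa : nat).

Definition site_pattern_prob (P : tensor3 R kappa) : Prop :=
  (forall i j l, 0 <= P i j l) /\ \sum_i \sum_j \sum_l P i j l = 1.

(* Markov matrix: nonnegative entries, rows sum to 1 (acts on row vectors v M). *)
Definition markov (M : 'M[R]_kappa) : Prop :=
  (forall i j, 0 <= M i j) /\ (forall i, \sum_j M i j = 1).

(* Mode products P *_k M: the entry at (i_1,...,i_n) is the i_k-th entry of v M,
   v the row vector obtained by fixing all other indices. *)
Definition tmul1 (P : tensor3 R kappa) (M : 'M[R]_kappa) : tensor3 R kappa :=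
  fun i j l => \sum_m P m j l * M m i.
Definition tmul2 (P : tensor3 R kappa) (M : 'M[R]_kappa) : tensor3 R kappa :=
  fun i j l => \sum_m P i m l * M m j.
Definition tmul3 (P : tensor3 R kappa) (M : 'M[R]_kappa) : tensor3 R kappa :=
  fun i j l => \sum_m P i j m * M m l.
Definition tmul (P : tensor3 R kappa) (M1 M2 M3 : 'M[R]_kappa) : tensor3 R kappa :=
  tmul3 (tmul2 (tmul1 P M1) M2) M3.

Definition marg_ab (P : tensor3 R kappa) : 'M[R]_kappa := \matrix_(i, j) \sum_l P i j l.
Definition marg_ac (P : tensor3 R kappa) : 'M[R]_kappa := \matrix_(i, l) \sum_j P i j l.
Definition marg_bc (P : tensor3 R kappa) : 'M[R]_kappa := \matrix_(j, l) \sum_i P i j l.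

(* The 2-clades of ((a,b),c)|_Y are:
     Y = {a,b,c} : {a,b};   Y = {a,b} : {a,b};   Y = {a,c} : {a,c};
     Y = {b,c}   : {b,c};   |Y| <= 1 : none.
   For each, P_Y must be invariant under exchange of the two indices. *)
Definition UE_abc (P : tensor3 R kappa) : Prop :=
  site_pattern_prob P /\
  (forall i j l, P i j l = P j i l) /\
  (marg_ab P)^T = marg_ab P /\
  (marg_ac P)^T = marg_ac P /\
  (marg_bc P)^T = marg_bc P.

Definition EE_abc (P : tensor3 R kappa) : Prop :=
  site_pattern_prob P /\
  exists (M1 M2 M3 : 'M[R]_kappa) (Pt : tensor3 R kappa),
    markov M1 /\ markov M2 /\ markov M3 /\
    M1 \in unitmx /\ M2 \in unitmx /\ M3 \in unitmx /\
    (forall i j l, 0 <= Pt i j l) /\ UE_abc Pt /\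
    tmul P M1 M2 M3 = Pt.

Definition Pplus1 (P : tensor3 R kappa) : 'M[R]_kappa := \matrix_(j, l) \sum_i P i j l.
Definition Pplus2 (P : tensor3 R kappa) : 'M[R]_kappa := \matrix_(i, l) \sum_j P i j l.
Definition Pslice3 (P : tensor3 R kappa) (k : 'I_kappa) : 'M[R]_kappa :=
  \matrix_(i, j) P i j k.

End Defs.

Definition Cof (R : comRingType) (n : nat) (A : 'M[R]_n) : 'M[R]_n :=
  \matrix_(i, j) cofactor A i j.

From mathcomp Require Import all_boot all_order all_algebra.
Import Order.TTheory GRing.Theory Num.Theory.
Set Implicit Arguments. Unset Strict Implicit. Unset Printing Implicit Defensive.
Local Open Scope ring_scope.

(* Let P lie in EE(((a,b),c)), witnessed by non-singular Markov
   matrices M1, M2, M3 and Pt = P * (M1, M2, M3) symmetric in its a,b indices.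
   Writing A1 = P_{+..}, A2 = P_{.+.} and S_k = P_{..k}:
   - summing Pt over a (resp. b) uses that the rows of M1 (resp. M2) sum to 1,
     giving Pt_{+..} = M2^T A1 M3 and Pt_{.+.} = M1^T A2 M3; the a,b-symmetry
     of Pt and the invertibility of M3 yield M2^T A1 = M1^T A2;
   - the slices of Pt are Pt_{..l} = sum_c M3_{cl} M1^T S_c M2, and again the
     invertibility of M3 makes every congruent slice M1^T S_c M2 symmetric.
   A purely algebraic lemma over any commutative ring with units then shows:
   if N is invertible, N^T B = M^T A and M^T S N is symmetric, then
   B adj(A) S is symmetric (conjugating by N gives det(A) M^T S N).
   Since Cof A = adj(A)^T, both families of polynomials in the corollary are
   of the form X - X^T for such a symmetric X. *)

Lemma CofE (R : comNzRingType) n (A : 'M[R]_n) : Cof A = (\adj A)^T.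
Proof. by apply/matrixP => i j; rewrite !mxE. Qed.

Lemma sym_congruence (R : comUnitRingType) n (N X : 'M[R]_n) :
  N \in unitmx -> (N^T *m X *m N)^T = N^T *m X *m N -> X^T = X.
Proof.
move=> UN; rewrite !trmx_mul trmxK mulmxA => symNXN.
have UNt : N^T \in unitmx by rewrite unitmx_tr.
by rewrite -[X^T](mulKmx UNt) -[N^T *m X^T](mulmxK UN) symNXN mulmxK // mulKmx.
Qed.

(* Key algebraic step: under N^T B = M^T A, conjugating B adj(A) S by N
   gives det(A) (M^T S N), hence symmetry transfers. *)
Lemma adj_sandwich_sym (R : comUnitRingType) n (A B S M N : 'M[R]_n) :
  N \in unitmx -> N^T *m B = M^T *m A ->
  (M^T *m S *m N)^T = M^T *m S *m N ->
  (B *m \adj A *m S)^T = B *m \adj A *m S.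
Proof.
move=> UN eqNB symMSN; apply: (sym_congruence UN).
have -> : N^T *m (B *m \adj A *m S) *m N = \det A *: (M^T *m S *m N).
  by rewrite !mulmxA eqNB -(mulmxA M^T) mul_mx_adj mul_mx_scalar !scalemxAl.
by rewrite linearZ /= symMSN.
Qed.

Lemma unitmx_rows_coef_inj (R : comUnitRingType) n (M : 'M[R]_n) (x y : 'I_n -> R) :
  M \in unitmx -> (forall l, \sum_c x c * M c l = \sum_c y c * M c l) ->
  forall c, x c = y c.
Proof.
move=> UM eqxy c.
have eqrow : \row_c x c *m M = \row_c y c *m M.
  by apply/matrixP => z l; rewrite !mxE; under eq_bigr do rewrite mxE;
     under [RHS]eq_bigr do rewrite mxE.
by have /matrixP/(_ 0 c) := can_inj (mulmxK UM) eqrow; rewrite !mxE.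
Qed.

Section ModeProducts.
Variables (R : realFieldType) (n : nat) (P : tensor3 R n) (M1 M2 M3 : 'M[R]_n).

Lemma tmul_sliceE i j l :
  tmul P M1 M2 M3 i j l = \sum_c (M1^T *m Pslice3 P c *m M2) i j * M3 c l.
Proof.
rewrite /tmul /tmul3 /tmul2 /tmul1; apply: eq_bigr => c _; congr (_ * _).
rewrite !mxE; apply: eq_bigr => b _; rewrite !mxE; congr (_ * _).
by apply: eq_bigr => a _; rewrite !mxE mulrC.
Qed.

Lemma tmul_marg1 j l : markov M1 ->
  (M2^T *m Pplus1 P *m M3) j l = \sum_i tmul P M1 M2 M3 i j l.
Proof.
move=> [_ rowsM1]; rewrite /tmul /tmul3 /tmul2 /tmul1 exchange_big mxE.
apply: eq_bigr => c _; rewrite -mulr_suml mxE; congr (_ * _).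
rewrite exchange_big; apply: eq_bigr => b _; rewrite -mulr_suml !mxE mulrC.
congr (_ * _); rewrite exchange_big; apply: eq_bigr => a _.
by rewrite -mulr_sumr rowsM1 mulr1.
Qed.

Lemma tmul_marg2 i l : markov M2 ->
  (M1^T *m Pplus2 P *m M3) i l = \sum_j tmul P M1 M2 M3 i j l.
Proof.
move=> [_ rowsM2]; rewrite /tmul /tmul3 /tmul2 /tmul1 exchange_big mxE.
apply: eq_bigr => c _; rewrite -mulr_suml mxE; congr (_ * _).
rewrite exchange_big.
under [RHS]eq_bigr => b _ do rewrite -mulr_sumr rowsM2 mulr1.
rewrite exchange_big; apply: eq_bigr => a _.
by rewrite !mxE -mulr_suml mulrC.
Qed.

Hypotheses (symPt : forall i j l, tmul P M1 M2 M3 i j l = tmul P M1 M2 M3 j i l)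
           (unitM3 : M3 \in unitmx).

Lemma margins_linked : markov M1 -> markov M2 ->
  M2^T *m Pplus1 P = M1^T *m Pplus2 P.
Proof.
move=> mk1 mk2; apply: (can_inj (mulmxK unitM3)); apply/matrixP => j l.
rewrite tmul_marg1 // tmul_marg2 //.
by apply: eq_bigr => i _; rewrite symPt.
Qed.

Lemma slices_sym c :
  (M1^T *m Pslice3 P c *m M2)^T = M1^T *m Pslice3 P c *m M2.
Proof.
apply/matrixP => i j; rewrite mxE.
apply: (@unitmx_rows_coef_inj _ _ M3 (fun c => (M1^T *m Pslice3 P c *m M2) j i)
  (fun c => (M1^T *m Pslice3 P c *m M2) i j) unitM3) => l.
by rewrite -!tmul_sliceE symPt.
Qed.

End ModeProducts.

Theorem corollary6p2 (R : realFieldType) (kappa : nat) (hk : (2 <= kappa)%N)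
  (P : tensor3 R kappa) :
  EE_abc P ->
  forall k : 'I_kappa,
    Pplus1 P *m (Cof (Pplus2 P))^T *m Pslice3 P k
      - (Pslice3 P k)^T *m Cof (Pplus2 P) *m (Pplus1 P)^T = 0
    /\
    Pslice3 P k *m Cof (Pplus1 P) *m (Pplus2 P)^T
      - Pplus2 P *m (Cof (Pplus1 P))^T *m (Pslice3 P k)^T = 0.
Proof.
move=> [_ [M1 [M2 [M3 [Pt [mk1 [mk2 [_ [U1 [U2 [U3 [_ [[_ [symPt _]] defPt]]]]]]]]]]]]] k.
rewrite -{}defPt in symPt.
have linked := margins_linked symPt U3 mk1 mk2.
have symS := slices_sym symPt U3 k.
have symSt : (M2^T *m (Pslice3 P k)^T *m M1)^T = M2^T *m (Pslice3 P k)^T *m M1.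
  by rewrite -[M1 in LHS]trmxK -[M1 in RHS]trmxK -!trmx_mul mulmxA symS.
rewrite !CofE !trmxK; split; apply/eqP; rewrite subr_eq0; apply/eqP.
- rewrite -(adj_sandwich_sym U2 linked symS).
  by rewrite !trmx_mul mulmxA.
- rewrite -(adj_sandwich_sym U1 (esym linked) symSt).
  by rewrite !trmx_mul trmxK mulmxA.
Qed.
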